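(* There exists a constant $C>0$ such that for every natural number $n$ and every natural number $\alpha$ with $5 \log n \leq \alpha \leq n$, there exist $t \geq \frac{1}{C n^5}\, 2^\alpha$ strings $x_1, \ldots, x_t \in \{0,1\}^n$ that are pairwise $\alpha$-independent, i.e. $C(x_i) - C(x_i \mid x_j) \leq \alpha$ for all $i \neq j$.
   Context: $C(x)$ denotes the plain Kolmogorov complexity of the binary string $x$ with respect to a fixed universal Turing machine; $C(x \mid y)$ denotes the conditional plain Kolmogorov complexity of $x$ given $y$ with respect to a fixed universal conditional machine. Logarithms are base $2$. *)

From Stdlib Require Import List Arith Reals ClassicalEpsilon.
Import ListNotations.

Inductive code : Type :=
| CZero
| CSucc
| CProj (i : nat)
| CComp (f : code) (gs : list code)
| CPrec (f g : code)
| CMu (f : code).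

Inductive eval : code -> list nat -> nat -> Prop :=
| ev_zero args : eval CZero args 0
| ev_succ args : eval CSucc args (S (hd 0 args))
| ev_proj i args : eval (CProj i) args (nth i args 0)
| ev_comp f gs args ys y :
    evals gs args ys -> eval f ys y -> eval (CComp f gs) args y
| ev_prec0 f g rest y : eval f rest y -> eval (CPrec f g) (0 :: rest) y
| ev_precS f g n rest z y :
    eval (CPrec f g) (n :: rest) z -> eval g (n :: z :: rest) y ->
    eval (CPrec f g) (S n :: rest) y
| ev_mu f args n :
    eval f (n :: args) 0 ->
    (forall m, m < n -> exists k, eval f (m :: args) (S k)) ->
    eval (CMu f) args n
with evals : list code -> list nat -> list nat -> Prop :=
| evs_nil args : evals [] args []
| evs_cons g gs args y ys :
    eval g args y -> evals gs args ys -> evals (g :: gs) args (y :: ys).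

(* Bijective encoding of binary strings into natural numbers. *)
Fixpoint enc (s : list bool) : nat :=
  match s with
  | [] => 0
  | b :: s' => S (2 * enc s' + (if b then 1 else 0))
  end.

(* Machines as partial functions on binary strings (None = diverges). *)
Definition machine := list bool -> option (list bool).
Definition cmachine := list bool -> list bool -> option (list bool).

Definition computable (M : machine) : Prop :=
  exists c, forall p n, eval c [enc p] n <-> exists x, M p = Some x /\ n = enc x.

Definition ccomputable (M : cmachine) : Prop :=
  exists c, forall p y n,
    eval c [enc p; enc y] n <-> exists x, M p y = Some x /\ n = enc x.

Definition universal (U : machine) : Prop :=
  computable U /\
  forall M, computable M -> exists c : nat, forall p x,
    M p = Some x -> exists q, U q = Some x /\ length q <= length p + c.

Definition cuniversal (U : cmachine) : Prop :=
  ccomputable U /\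
  forall M, ccomputable M -> exists c : nat, forall p y x,
    M p y = Some x -> exists q, U q y = Some x /\ length q <= length p + c.

Definition least (P : nat -> Prop) : nat :=
  epsilon (inhabits 0) (fun k => P k /\ forall j, P j -> k <= j).

Definition KC (V : machine) (x : list bool) : nat :=
  least (fun k => exists p, V p = Some x /\ length p = k).

Definition KCc (U : cmachine) (x y : list bool) : nat :=
  least (fun k => exists p, U p y = Some x /\ length p = k).

From Stdlib Require Import List Reals Lia Lra Classical ClassicalEpsilon Wf_nat.
From mathcomp Require all_boot.
Import ListNotations.

(* Every string of length [n] has [C(x) <= n + c].  Call [x] dependent on [z] when
   [C(x | z) < K := n + c - alpha]; distinct such [x] have distinct shortest programs
   of length [< K], so each [z] has fewer than [2 ^ K] dependents.  A relation on [2 ^ n]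
   vertices in which every vertex has at most [D] in-neighbours has a stable set of size
   at least [2 ^ n / (2 D + 1)]: by double counting some vertex has at most [D]
   out-neighbours, so it can be kept while discarding at most [2 D + 1] vertices.  This
   yields [2 ^ alpha / (3 * 2 ^ c)] pairwise independent strings, more than claimed. *)

Module StableSet.
Import all_boot.

Section BoundedInDegree.
Variables (T : finType) (adj : rel T) (D : nat).
Hypothesis in_degree_le : forall z, #|[set x | adj x z]| <= D.

Definition stable (I : {set T}) := {in I &, forall x y, x != y -> ~~ adj x y}.

Definition out_nbhd (S : {set T}) x := [set z in S | adj x z].
Definition in_nbhd (S : {set T}) x := [set z in S | adj z x].

Lemma card_out_nbhd_sum (S : {set T}) x : #|out_nbhd S x| = \sum_(z in S) adj x z.
Proof. by rewrite -big_mkcondr /= -sum1_card; apply: eq_bigl => z; rewrite !inE. Qed.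

Lemma card_in_nbhd_le (S : {set T}) z : #|in_nbhd S z| <= D.
Proof.
apply: leq_trans (in_degree_le z); apply: subset_leq_card.
by apply/subsetP => x; rewrite !inE => /andP[].
Qed.

(* Double counting: the out-degrees within [S] sum to the in-degrees, at most [D * #|S|]. *)
Lemma exists_small_out_degree (S : {set T}) :
  S != set0 -> exists2 x, x \in S & #|out_nbhd S x| <= D.
Proof.
move=> /set0Pn[x0 Sx0].
have [x /andP[Sx small] | large] := pickP [pred x in S | #|out_nbhd S x| <= D].
  by exists x.
have out_sum : \sum_(x in S) D.+1 <= \sum_(x in S) \sum_(z in S) (adj x z : nat).
  apply: leq_sum => x Sx; rewrite -card_out_nbhd_sum ltnNge.
  by move: (large x); rewrite /= Sx /= => ->.
have in_sum : \sum_(x in S) \sum_(z in S) (adj x z : nat) <= \sum_(z in S) D.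
  rewrite exchange_big /=; apply: leq_sum => z _.
  rewrite -big_mkcondr /= sum1_card; apply: leq_trans (card_in_nbhd_le S z).
  by apply/eq_leq/eq_card => x; rewrite !inE.
have := leq_trans out_sum in_sum; rewrite !sum_nat_const leq_pmul2l ?ltnn //.
by apply/card_gt0P; exists x0.
Qed.

Lemma card_closed_nbhd_le (S : {set T}) x : #|out_nbhd S x| <= D ->
  #|x |: (out_nbhd S x :|: in_nbhd S x)| <= D.*2.+1.
Proof.
move=> out_le; rewrite -addn1 addnC; apply: leq_trans (leq_card_setU _ _) _.
rewrite cards1 leq_add2l -addnn; apply: leq_trans (leq_card_setU _ _) _.
by rewrite leq_add ?card_in_nbhd_le.
Qed.

(* Greedy choice: keep a vertex of small out-degree, discard its closed neighbourhood. *)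
Lemma large_stable_subset (S : {set T}) :
  exists I : {set T}, [/\ I \subset S, stable I & #|S| <= D.*2.+1 * #|I|].
Proof.
have [m] := ubnP #|S|; elim: m S => // m IH S ltSm.
have [-> | /exists_small_out_degree [x Sx out_le]] := eqVneq S set0.
  by exists set0; rewrite sub0set cards0; split=> // y z; rewrite inE.
set N := x |: (out_nbhd S x :|: in_nbhd S x).
have Nx : x \in N by rewrite !inE eqxx.
have ltRm : #|S :\: N| < m.
  rewrite -ltnS; apply: leq_ltn_trans _ ltSm; rewrite -(cardsID N S) -[X in X < _]add0n ltn_add2r.
  by apply/card_gt0P; exists x; rewrite inE Sx.
have [I [subIR stableI leRI]] := IH _ ltRm.
have I_not_N y : y \in I -> y \notin N by move=> /(subsetP subIR); rewrite inE => /andP[].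
have I_S y : y \in I -> y \in S by move=> /(subsetP subIR); rewrite inE => /andP[].
exists (x |: I); split.
- by apply/subsetP => y /setU1P[-> | /I_S].
- have nadj y : y \in I -> ~~ adj x y && ~~ adj y x.
    by move=> Iy; move: (I_not_N y Iy); rewrite !inE I_S //= !negb_or => /and3P[_ -> ->].
  move=> y z /setU1P[-> | Iy] /setU1P[-> | Iz]; rewrite ?eqxx //.
  + by move=> _; case/andP: (nadj z Iz).
  + by move=> _; case/andP: (nadj y Iy).
  + exact: stableI.
- have xI : x \notin I by apply/negP => /I_not_N; rewrite Nx.
  rewrite -(cardsID N S) cardsU1 xI mulnDr muln1 leq_add //.
  by apply: leq_trans (subset_leq_card (subsetIr S N)) _; apply: card_closed_nbhd_le.
Qed.
End BoundedInDegree.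

Lemma In_mem {T : eqType} (s : seq T) x : In x s -> x \in s.
Proof. by elim: s => //= y s IHs [-> | /IHs]; rewrite inE ?eqxx // => ->; rewrite orbT. Qed.

Lemma uniq_NoDup {T : eqType} (s : seq T) : uniq s -> NoDup s.
Proof.
elim: s => [|a s IHs] /=; first by constructor.
move=> /andP[a_s uniq_s]; constructor; last exact: IHs.
by apply: contraNnot a_s => /In_mem.
Qed.

Lemma length_size {T : Type} (s : seq T) : length s = size s.
Proof. by elim: s => //= x s ->. Qed.

Lemma Nat_powE m n : Nat.pow m n = m ^ n.
Proof. by elim: n => // n IHn; rewrite expnS -IHn. Qed.

Lemma card_le_of_code (T : finType) (A : {set T}) (f : T -> nat) D :
  (forall x, x \in A -> f x < D) -> {in A &, injective f} -> #|A| <= D.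
Proof.
move=> f_lt f_inj; rewrite cardE -(size_map f) -(size_iota 0 D).
apply: uniq_leq_size => [|_ /mapP[x + ->]].
  by rewrite map_inj_in_uniq ?enum_uniq // => x y; rewrite !mem_enum; apply: f_inj.
by rewrite mem_enum mem_iota add0n => /f_lt.
Qed.

(* Stated in Stdlib arithmetic for use outside this module, where [*] and [+]
   would otherwise mean [muln] and [addn]. *)
Lemma large_stable_strings (n D : nat) (adj : list bool -> list bool -> bool) :
  (forall z, length z = n -> exists f : list bool -> nat,
     (forall x, length x = n -> adj x z -> (f x < D)%coq_nat) /\
     (forall x x', length x = n -> length x' = n -> adj x z -> adj x' z ->
        f x = f x' -> x = x')) ->
  exists xs : list (list bool), NoDup xs /\ Forall (fun x => length x = n) xs /\
    (Nat.pow 2 n <= Nat.mul (Nat.add (Nat.mul 2 D) 1) (length xs))%coq_nat /\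
    (forall x y, In x xs -> In y xs -> x <> y -> adj x y = false).
Proof.
move=> in_code.
pose adjT (x z : n.-tuple bool) := adj x z.
have len_tuple (x : n.-tuple bool) : length x = n by rewrite length_size size_tuple.
have in_degree_le z : #|[set x | adjT x z]| <= D.
  have [f [f_lt f_inj]] := in_code z (len_tuple z).
  apply: (@card_le_of_code _ _ (fun x : n.-tuple bool => f x)) => [x | x y].
    by rewrite inE => adj_xz; apply/ltP/f_lt.
  by rewrite !inE => adj_xz adj_yz /f_inj eq_xy; apply/val_inj/eq_xy.
have [I [_ stableI leTI]] := @large_stable_subset _ _ _ in_degree_le [set: n.-tuple bool].
exists (map val (enum I)); split; [|split; [|split]].
- by apply/uniq_NoDup; rewrite map_inj_uniq ?enum_uniq //; apply: val_inj.
- by apply/Forall_forall => _ /In_mem /mapP[x _ ->]; apply: len_tuple.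
- apply/leP; move: leTI.
  by rewrite multE plusE cardsT card_tuple card_bool Nat_powE length_size size_map -cardE mul2n addn1.
- move=> _ _ /In_mem /mapP[x + ->] /In_mem /mapP[y + ->]; rewrite !mem_enum => Ix Iy neq_xy.
  apply/negbTE/stableI => //.
  by apply/eqP => eq_xy; apply: neq_xy; rewrite eq_xy.
Qed.
End StableSet.

Lemma least_spec (P : nat -> Prop) :
  (exists k, P k) -> P (least P) /\ (forall j, P j -> least P <= j).
Proof.
  intros HP. unfold least. apply epsilon_spec.
  destruct (dec_inh_nat_subset_has_unique_least_element P (fun k => classic (P k)) HP)
    as [k [Hk _]].
  now exists k.
Qed.

Lemma KC_le_length V x p : V p = Some x -> KC V x <= length p.
Proof.
  intros Hp.
  assert (Hex : exists k p, V p = Some x /\ length p = k) by now exists (length p), p.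
  apply (least_spec _ Hex). now exists p.
Qed.

Lemma computable_id : computable (fun p => Some p).
Proof.
  exists (CProj 0). intros p n. split.
  - intros H. inversion H; subst. now exists p.
  - intros [x [[= ->] ->]]. constructor.
Qed.

Lemma ccomputable_id : ccomputable (fun p _ => Some p).
Proof.
  exists (CProj 0). intros p y n. split.
  - intros H. inversion H; subst. now exists p.
  - intros [x [[= ->] ->]]. constructor.
Qed.

Lemma KC_le_length_add V : universal V -> exists c, forall x, KC V x <= length x + c.
Proof.
  intros [_ Vopt]. destruct (Vopt _ computable_id) as [c Hc]. exists c. intros x.
  destruct (Hc x x eq_refl) as [q [Hq Hlen]].
  pose proof (KC_le_length V x q Hq). lia.
Qed.

Lemma KCc_attained U x y : cuniversal U ->
  exists p, U p y = Some x /\ length p = KCc U x y.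
Proof.
  intros [_ Uopt]. destruct (Uopt _ ccomputable_id) as [c Hc].
  destruct (Hc x y x eq_refl) as [q [Hq _]].
  apply (least_spec (fun k => exists p, U p y = Some x /\ length p = k)).
  now exists (length q), q.
Qed.

Lemma enc_succ_lt p : S (enc p) < 2 ^ S (length p).
Proof. induction p as [|b p IH]; simpl in *; [lia | destruct b; lia]. Qed.

Lemma enc_inj p q : enc p = enc q -> p = q.
Proof.
  revert q; induction p as [|b p IH]; intros [|b' q] H; simpl in H; try lia; [easy|].
  destruct b, b'; f_equal; try apply IH; lia.
Qed.

(* A shortest program determines [x], and [enc] maps programs of length [< K] below [2 ^ K]. *)
Lemma KCc_lt_code U y K : cuniversal U -> exists f : list bool -> nat,
  (forall x, KCc U x y < K -> f x < 2 ^ K) /\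
  (forall x x', f x = f x' -> x = x').
Proof.
  intros HU.
  set (shortest x := epsilon (inhabits [])
         (fun p => U p y = Some x /\ length p = KCc U x y)).
  assert (Hshortest : forall x, U (shortest x) y = Some x /\ length (shortest x) = KCc U x y)
    by (intros x; apply epsilon_spec, KCc_attained, HU).
  exists (fun x => enc (shortest x)). split.
  - intros x Hx. destruct (Hshortest x) as [_ Hlen].
    pose proof (enc_succ_lt (shortest x)).
    pose proof (Nat.pow_le_mono_r 2 (S (length (shortest x))) K ltac:(lia) ltac:(lia)).
    lia.
  - intros x x' Hx. apply enc_inj in Hx.
    destruct (Hshortest x) as [Hp _], (Hshortest x') as [Hp' _].
    congruence.
Qed.

Lemma INR_ge_pow_div (alpha b t n k : nat) :
  2 ^ alpha <= b * t -> 0 < b -> 0 < n ->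
  (INR t >= 2 ^ alpha / (INR b * INR n ^ k))%R.
Proof.
  intros Hle Hb Hn.
  apply le_INR in Hle. rewrite pow_INR, mult_INR in Hle. simpl (INR 2) in Hle.
  assert (Hb' : (0 < INR b)%R) by (apply lt_0_INR; lia).
  assert (Hn' : (1 <= INR n ^ k)%R) by (apply pow_R1_Rle, (le_INR 1); lia).
  assert (Ht : (0 <= INR t)%R) by apply pos_INR.
  apply Rle_ge. unfold Rdiv.
  apply (Rmult_le_reg_r (INR b * INR n ^ k)); [nra|].
  rewrite Rmult_assoc, Rinv_l, Rmult_1_r by nra.
  replace (1 + 1)%R with 2%R in Hle by ring.
  assert (Hbt : (0 <= INR b * INR t)%R) by nra.
  nra.
Qed.

Lemma many_pairwise_independent_strings V U : universal V -> cuniversal U ->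
  exists c, forall n alpha, alpha <= n ->
    exists xs : list (list bool),
      NoDup xs /\ Forall (fun x => length x = n) xs /\
      2 ^ alpha <= 3 * 2 ^ c * length xs /\
      (forall x y, In x xs -> In y xs -> x <> y -> KC V x <= KCc U x y + alpha).
Proof.
  intros HV HU. destruct (KC_le_length_add V HV) as [c Hc]. exists c.
  intros n alpha Halpha. set (K := n + c - alpha).
  destruct (StableSet.large_stable_strings n (2 ^ K) (fun x z => KCc U x z <? K))
    as (xs & Hnodup & Hlen & Hcard & Hstable).
  { intros z _. destruct (KCc_lt_code U z K HU) as [f [Hlt Hinj]].
    exists f. split.
    - intros x _ Hx. now apply Hlt, Nat.ltb_lt.
    - intros x x' _ _ _ _. apply Hinj. }
  exists xs. repeat split; [exact Hnodup | exact Hlen | |].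
  - assert (Hpow : 2 ^ alpha * 2 ^ K = 2 ^ n * 2 ^ c)
      by (rewrite <- !Nat.pow_add_r; f_equal; lia).
    assert (HK : 1 <= 2 ^ K) by (pose proof (Nat.pow_nonzero 2 K); lia).
    assert (Hn : 1 <= 2 ^ n) by (pose proof (Nat.pow_nonzero 2 n); lia).
    assert (Hcard3 : 2 ^ n <= 3 * 2 ^ K * length xs) by nia.
    apply (Nat.mul_le_mono_pos_l _ _ (2 ^ n)); nia.
  - intros x y Hx Hy Hxy. specialize (Hstable x y Hx Hy Hxy). apply Nat.ltb_ge in Hstable.
    rewrite Forall_forall in Hlen. specialize (Hc x). rewrite (Hlen x Hx) in Hc. lia.
Qed.

Theorem theorem5 :
  forall (V : machine) (U : cmachine), universal V -> cuniversal U ->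
  exists Cc : R, (Cc > 0)%R /\
    forall n alpha : nat, (0 < n)%nat ->
      (5 * (ln (INR n) / ln 2) <= INR alpha)%R -> (alpha <= n)%nat ->
      exists xs : list (list bool),
        NoDup xs /\
        Forall (fun x => length x = n) xs /\
        (INR (length xs) >= 2 ^ alpha / (Cc * INR n ^ 5))%R /\
        (forall x y, In x xs -> In y xs -> x <> y ->
           (INR (KC V x) - INR (KCc U x y) <= INR alpha)%R).
Proof.
  intros V U HV HU.
  destruct (many_pairwise_independent_strings V U HV HU) as [c Hc].
  assert (Hc3 : 0 < 3 * 2 ^ c) by (pose proof (Nat.pow_nonzero 2 c); lia).
  exists (INR (3 * 2 ^ c)). split; [now apply lt_0_INR |].
  intros n alpha Hn _ Halpha.
  destruct (Hc n alpha Halpha) as (xs & Hnodup & Hlen & Hcard & Hindep).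
  exists xs. repeat split; [exact Hnodup | exact Hlen | now apply INR_ge_pow_div |].
  intros x y Hx Hy Hxy. specialize (Hindep x y Hx Hy Hxy).
  apply le_INR in Hindep. rewrite plus_INR in Hindep. lra.
Qed.
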